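(* For every integer $n \ge 2$, $$\chi_{2K_2}(P_n) \ge \sqrt{2\left\lceil \frac{n-1}{3} \right\rceil + \frac14} + \frac12.$$
   Context: All graphs are finite and simple. For a fixed bipartite graph $H$, a proper vertex coloring of a graph $G$ is called an $H$-avoiding coloring if for any two color classes, the subgraph of $G$ induced by their union contains no induced subgraph isomorphic to $H$. $\chi_H(G)$ denotes the minimum number of colors in an $H$-avoiding coloring of $G$. $P_n$ is the path on $n$ vertices and $2K_2$ is the disjoint union of two edges. *)

From mathcomp Require Import all_boot all_order all_algebra.
Set Implicit Arguments. Unset Strict Implicit. Unset Printing Implicit Defensive.

(* A simple graph is a symmetric irreflexive relation e : rel T on a finType T. *)

Definition path_graph (n : nat) : rel 'I_n :=
  fun i j => (i.+1 == j :> nat) || (j.+1 == i :> nat).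

Arguments path_graph n : clear implicits.

Definition twoK2 : rel 'I_4 :=
  fun u v => [|| (u == 0 :> nat) && (v == 1 :> nat), (u == 1 :> nat) && (v == 0 :> nat),
                 (u == 2 :> nat) && (v == 3 :> nat) | (u == 3 :> nat) && (v == 2 :> nat)].

Definition proper_coloring (T : finType) (e : rel T) (k : nat) (c : {ffun T -> 'I_k}) : bool :=
  [forall x, forall y, e x y ==> (c x != c y)].

Definition has_induced_copy (H : finType) (eH : rel H) (T : finType) (e : rel T)
    (S : pred T) : bool :=
  [exists f : {ffun H -> T},
     [&& injectiveb f, [forall u, f u \in S]
       & [forall u, forall v, eH u v == e (f u) (f v)]]].

Definition H_avoiding (H : finType) (eH : rel H) (T : finType) (e : rel T)
    (k : nat) (c : {ffun T -> 'I_k}) : bool :=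
  proper_coloring e c &&
  [forall i : 'I_k, forall j : 'I_k,
     (i != j) ==> ~~ has_induced_copy eH e [pred x | (c x == i) || (c x == j)]].

Definition has_H_avoiding_coloring (H : finType) (eH : rel H) (T : finType) (e : rel T)
    (k : nat) : bool :=
  [exists c : {ffun T -> 'I_k}, H_avoiding eH e c].

(* chi_H(G): the least k admitting an H-avoiding coloring with k colors,
   found by searching k = 0, 1, ..., #|T| (find returns the index, which equals k
   since the list starts at 0).  For H = 2K_2 an injective coloring with #|T|
   colors is always H-avoiding, so the search always succeeds and this is the
   true minimum. *)
Definition chi_H (H : finType) (eH : rel H) (T : finType) (e : rel T) : nat :=
  find (has_H_avoiding_coloring eH e) (iota 0 #|T|.+1).

From mathcomp Require Import all_boot all_order all_algebra.
From mathcomp Require Import zify lra.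
Import Order.TTheory GRing.Theory Num.Theory.

Set Implicit Arguments.
Unset Strict Implicit.
Unset Printing Implicit Defensive.

(* Let c be a 2K_2-avoiding colouring of P_n with k colours, where n = m + 2,
   the vertices are 0, ..., m + 1 and the edges are {a, a + 1} for a <= m.
   If two edges {a, a + 1} and {b, b + 1} with b >= a + 3 received the same
   (unordered) pair of colours, their four endpoints would induce a 2K_2
   inside the union of two colour classes, which c forbids.  Hence the edges
   {3i, 3i + 1} with 3i <= m, of which there are ceil((m + 1) / 3) =
   ceil((n - 1) / 3), carry pairwise distinct 2-sets of colours, and so
   ceil((n - 1) / 3) <= C(k, 2).  Since chi_H is either the least k for which
   such a colouring exists or, if the search fails, n + 1, the same bound
   holds for k = chi_H; solving k (k - 1) / 2 >= q for k gives the claim. *)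

Lemma avoiding_two_classes (H : finType) (eH : rel H) (T : finType) (e : rel T)
    (k : nat) (c : {ffun T -> 'I_k}) (i j : 'I_k) :
  H_avoiding eH e c -> i != j ->
  ~~ has_induced_copy eH e [pred x | (c x == i) || (c x == j)].
Proof. by case/andP=> _ /forallP/(_ i)/forallP/(_ j)/implyP. Qed.

Section PathColouring.

Variables (m k : nat) (c : {ffun 'I_m.+2 -> 'I_k}).
Hypothesis c_avoiding : H_avoiding twoK2 (path_graph m.+2) c.

Definition vertex (a : nat) : 'I_m.+2 := inord a.

Lemma vertexK (a : nat) : a <= m.+1 -> vertex a = a :> nat.
Proof. exact: inordK. Qed.

Lemma edge_colours_differ (a : nat) : a <= m -> c (vertex a) != c (vertex a.+1).
Proof.
move=> le_am; case/andP: c_avoiding => proper _.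
apply: (implyP (forallP (forallP proper (vertex a)) (vertex a.+1))).
by rewrite /path_graph !vertexK ?eqxx // ltnW.
Qed.

Definition edge_colours (a : nat) : {set 'I_k} := [set c (vertex a); c (vertex a.+1)].

Lemma edge_colours_card (a : nat) : a <= m -> #|edge_colours a| = 2.
Proof. by move=> le_am; rewrite cards2 edge_colours_differ. Qed.

(* Two edges at distance at least two (b >= a + 3) carry different colour
   pairs: otherwise their endpoints induce a 2K_2 on two colour classes. *)
Lemma far_edges_colours (a b : nat) :
  a.+3 <= b -> b <= m -> edge_colours a != edge_colours b.
Proof.
move=> le_ab le_bm; apply/eqP => same_colours.
have le_am : a <= m by lia.
have /negP := avoiding_two_classes c_avoiding (edge_colours_differ le_am); apply.
pose ends (u : 'I_4) := nth 0 [:: a; a.+1; b; b.+1] u.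
have ends_le u : ends u <= m.+1.
  by rewrite /ends; case: u => -[|[|[|[|u]]]] //= ?; lia.
pose f := [ffun u => vertex (ends u)].
have fE u : f u = ends u :> nat by rewrite ffunE vertexK ?ends_le.
apply/existsP; exists f; apply/and3P; split.
- apply/injectiveP => u v /(congr1 (@nat_of_ord _)); rewrite !fE /ends => ends_uv.
  apply: val_inj.
  by move: ends_uv; case: u => -[|[|[|[|u]]]] //= ?; case: v => -[|[|[|[|v]]]] //= ?; lia.
- apply/forallP => u; rewrite inE ffunE.
  have : c (vertex (ends u)) \in edge_colours b ->
         (c (vertex (ends u)) == c (vertex a)) || (c (vertex (ends u)) == c (vertex a.+1)).
    by rewrite -same_colours => /set2P[-> | ->]; rewrite eqxx ?orbT.
  rewrite /ends; case: u => -[|[|[|[|u]]]] //= ?; rewrite ?eqxx ?orbT // => in_pair;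
    by apply: in_pair; rewrite !inE eqxx ?orbT.
- apply/forallP => u; apply/forallP => v; rewrite /twoK2 /path_graph !fE /ends.
  case: u => -[|[|[|[|u]]]] //= ?; case: v => -[|[|[|[|v]]]] //= ?;
    by repeat (case: eqP => //= ?); lia.
Qed.

(* Counting the edges {3i, 3i + 1}: ceil((m + 1) / 3) <= C(k, 2). *)
Lemma third_edges_bound : (m + 3) %/ 3 <= 'C(k, 2).
Proof.
pose g (i : 'I_((m + 3) %/ 3)) := edge_colours (3 * i).
have in_path (i : 'I_((m + 3) %/ 3)) : 3 * i <= m by have := ltn_ord i; lia.
have g_inj : injective g.
  move=> i j g_ij; apply: val_inj; case: (ltngtP i j) => [lt_ij | lt_ji | //].
  - have far : (3 * i).+3 <= 3 * j by lia.
    by case/negP: (far_edges_colours far (in_path j)); apply/eqP.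
  - have far : (3 * j).+3 <= 3 * i by lia.
    by case/negP: (far_edges_colours far (in_path i)); apply/eqP.
rewrite -[X in X <= _]card_ord -(card_imset _ g_inj) -[k in 'C(k, 2)]card_ord -card_draws.
apply/subset_leq_card/subsetP => _ /imsetP[i _ ->].
by rewrite inE edge_colours_card.
Qed.

End PathColouring.

Lemma chi_H_cases (H : finType) (eH : rel H) (T : finType) (e : rel T) :
  has_H_avoiding_coloring eH e (chi_H eH e) \/ chi_H eH e = #|T|.+1.
Proof.
rewrite /chi_H; set s := iota 0 _.
case: (boolP (has (has_H_avoiding_coloring eH e) s)) => found.
- left; have := nth_find 0 found.
  by rewrite nth_iota ?add0n // -[X in _ < X](size_iota 0) -has_find.
- by right; rewrite (hasNfind found) size_iota.
Qed.

Lemma chi_path_bound (n : nat) :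
  2 <= n -> (n - 1 + 2) %/ 3 <= 'C(chi_H twoK2 (path_graph n), 2).
Proof.
case: n => [|[|m]] // _; have -> : m.+2 - 1 + 2 = m + 3 by lia.
case: (chi_H_cases twoK2 (path_graph m.+2)) => [/existsP[c c_avoiding] | ->].
  exact: third_edges_bound c_avoiding.
rewrite card_ord binS bin1; lia.
Qed.

Local Open Scope ring_scope.

Lemma sqrt_bound_of_binomial (R : rcfType) (q k : nat) :
  (q <= 'C(k, 2))%N -> (0 < k)%N ->
  Num.sqrt (2 * q%:R + 1 / 4 : R) + 1 / 2 <= k%:R.
Proof.
move=> le_q_bin k_gt0.
have double_bin : (2 * 'C(k, 2) = k * (k - 1))%N by rewrite mul_bin_left bin1 mulnC.
have le_2q : (2 * q <= k * (k - 1))%N by rewrite -double_bin leq_mul2l.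
have le_sq : 2 * q%:R + 1 / 4 <= (k%:R - 1 / 2) ^+ 2 :> R.
  move: le_2q; rewrite -(ler_nat R) !natrM natrB // => le_2q; lra.
have k_half : 0 <= k%:R - 1 / 2 :> R.
  have : 1 <= k%:R :> R by rewrite ler1n.
  lra.
rewrite -lerBrDr -[X in _ <= X]ger0_norm // -sqrtr_sqr.
exact: ler_wsqrtr.
Qed.

Theorem corollary1 (R : rcfType) (n : nat) (hn : (2 <= n)%N) :
  Num.sqrt (2 * (divn (n - 1 + 2)%N 3)%:R + 1 / 4 : R) + 1 / 2
    <= (chi_H twoK2 (path_graph n))%:R.
Proof.
have bound := chi_path_bound hn.
have chi_ge2 : (2 <= chi_H twoK2 (path_graph n))%N.
  by rewrite -bin_gt0; apply: leq_trans bound; rewrite divn_gt0 //; lia.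
exact: sqrt_bound_of_binomial bound (leq_trans _ chi_ge2).
Qed.
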